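(* Under the assumptions of the following setting, the solution $(S_t,Q_t)$ of the deterministic delayed system \[ S_t'=\big[\alpha-k\sigma(Q_t)\big]S_t,\qquad Q_t'=d-mQ_t-k\sigma(Q_t)S_t+k\,b\,e^{-\mu\zeta}\sigma(Q_{t-\zeta})S_{t-\zeta},\quad t\ge0, \] with continuous initial functions $(S_{0,t},Q_{0,t})$ on $[-\zeta,0]$ satisfies, for some constant $c>0$ and all $t\ge0$, \[ |(S_t,Q_t)-E_0|\le c\,e^{-\eta t},\qquad E_0=(0,d/m),\quad\eta=\gamma\wedge\tfrac m2, \] where $\gamma=kd/m-\alpha$. Assumptions: $\gamma>0$, $M>d/m$, and for all $t\in[-\zeta,0]$: (i) $(S_{0,t},Q_{0,t})\in[0,M]\times[d/m,M]$; (ii) $b\,e^{-\mu\zeta}Q_{0,t}S_{0,t}>\frac dm S_{0,0}$ and $b\,e^{-\mu\zeta}>1$; (iii) $S_{0,t}<\frac{mM-d}{kbe^{-\mu\zeta}M}$.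
   Context: Parameters $\alpha,k,d,m,b,\mu,\zeta,M$ are positive constants. $\sigma:\mathbb R_+\to\mathbb R_+$ is a $C^\infty$ function with $\sigma(x)=x$ for $0\le x\le M$, $\sigma(x)=M+1$ for $x>M+1$, and $0\le\sigma'(x)\le C$ for some constant $C>1$. $|\cdot|$ is the Euclidean norm. *)

From Stdlib Require Import Reals Lra.
Open Scope R_scope.

Definition smooth_with (f : R -> R) (D : nat -> R -> R) : Prop :=
  D 0%nat = f /\ forall (n : nat) (x : R), derivable_pt_lim (D n) x (D (S n) x).

Definition continuous_from (a : R) (f : R -> R) : Prop :=
  forall t, a <= t -> forall eps, 0 < eps -> exists delta, 0 < delta /\
    forall s, a <= s -> Rabs (s - t) < delta -> Rabs (f s - f t) < eps.

Definition right_deriv (f : R -> R) (t l : R) : Prop :=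
  forall eps, 0 < eps -> exists delta, 0 < delta /\
    forall h, 0 < h < delta -> Rabs ((f (t + h) - f t) / h - l) < eps.

(* Write beta = b e^{-mu zeta} > 1 and gamma = k d/m - alpha > 0.
   1. Invariance: for all t >= 0, S t > 0 and d/m <= Q t <= M, so sigma(Q) = Q.
      This is a continuous induction on [0, oo).  While the invariant holds,
      S is nonincreasing; hence the delayed production k beta Q_D S_D stays above
      k (d/m) S (condition (ii), beta > 1) and below m M - d (condition (iii)),
      so Q' > 0 whenever Q touches d/m and Q' < 0 whenever Q touches M.
   2. Decay of S: in the region S' + gamma S <= 0, so S t <= S 0 e^{-gamma t}.
   3. Decay of Q - d/m: (Q - d/m)' + m (Q - d/m) <= k beta M S(t - zeta), which
      decays like e^{-gamma t}; a linear comparison argument with forcing gives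
      decay at any rate eta <= gamma with eta < m, in particular min(gamma, m/2).
   The file first proves general facts (mean value consequences, integrating
   factors, one-sided continuity and derivatives, continuous induction), then
   the model lemmas in a section parameterized by beta, and finally the theorem. *)

From Stdlib Require Import Reals Lra Classical.
Open Scope R_scope.

Lemma exp_le_mono x y : x <= y -> exp x <= exp y.
Proof.
  intros Hxy; destruct (Rle_lt_or_eq_dec _ _ Hxy) as [Hlt | ->].
  - left; apply exp_increasing, Hlt.
  - apply Rle_refl.
Qed.

Lemma nonincreasing_of_deriv_nonpos (f df : R -> R) a b :
  a <= b ->
  (forall x, a <= x <= b -> continuity_pt f x) ->
  (forall x, a < x < b -> derivable_pt_lim f x (df x)) ->
  (forall x, a < x < b -> df x <= 0) ->
  f b <= f a.
Proof.
  intros Hab Hcont Hder Hsign.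
  destruct (Rle_lt_or_eq_dec _ _ Hab) as [Hlt | ->]; [| apply Rle_refl].
  assert (prf : forall x, a < x < b -> derivable_pt f x)
    by (intros x Hx; exists (df x); apply Hder, Hx).
  assert (prid : forall x, a < x < b -> derivable_pt id x)
    by (intros x _; apply derivable_pt_id).
  destruct (MVT f id a b prf prid Hlt Hcont) as [x [Hx Hmvt]].
  { intros x _; apply derivable_continuous_pt, derivable_pt_id. }
  rewrite (derive_pt_eq_0 f x (df x) (prf x Hx) (Hder x Hx)) in Hmvt.
  rewrite (derive_pt_eq_0 id x 1 (prid x Hx) (derivable_pt_lim_id x)) in Hmvt.
  unfold id in Hmvt. pose proof (Hsign x Hx). nra.
Qed.

Lemma derivable_pt_lim_exp_lin a t :
  derivable_pt_lim (fun x => exp (a * x)) t (a * exp (a * t)).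
Proof.
  rewrite Rmult_comm.
  apply (derivable_pt_lim_comp (fun x => a * x) exp t a (exp (a * t))).
  - pose proof (derivable_pt_lim_scal id a t 1 (derivable_pt_lim_id t)) as H.
    rewrite Rmult_1_r in H; exact H.
  - apply derivable_pt_lim_exp.
Qed.

Lemma continuity_pt_exp_lin a t : continuity_pt (fun x => exp (a * x)) t.
Proof.
  apply derivable_continuous_pt. exists (a * exp (a * t)).
  apply derivable_pt_lim_exp_lin.
Qed.

Lemma derivable_pt_lim_mult_exp (f : R -> R) l a t :
  derivable_pt_lim f t l ->
  derivable_pt_lim (fun x => f x * exp (a * x)) t ((l + a * f t) * exp (a * t)).
Proof.
  intros Hf.
  replace ((l + a * f t) * exp (a * t))
    with (l * exp (a * t) + f t * (a * exp (a * t))) by ring.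
  apply (derivable_pt_lim_mult f (fun x => exp (a * x))); [exact Hf |].
  apply derivable_pt_lim_exp_lin.
Qed.

Lemma integrating_factor_bound (f df : R -> R) a lo hi :
  lo <= hi ->
  (forall x, lo <= x <= hi -> continuity_pt f x) ->
  (forall x, lo < x < hi -> derivable_pt_lim f x (df x)) ->
  (forall x, lo < x < hi -> df x + a * f x <= 0) ->
  f hi * exp (a * hi) <= f lo * exp (a * lo).
Proof.
  intros Hlh Hcont Hder Hsign.
  apply (nonincreasing_of_deriv_nonpos (fun x => f x * exp (a * x))
           (fun x => (df x + a * f x) * exp (a * x))); [exact Hlh | | |].
  - intros x Hx. apply continuity_pt_mult; [apply Hcont, Hx | apply continuity_pt_exp_lin].
  - intros x Hx. apply derivable_pt_lim_mult_exp, Hder, Hx.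
  - intros x Hx. pose proof (exp_pos (a * x)). pose proof (Hsign x Hx). nra.
Qed.

Lemma undo_integrating_factor x a t c :
  x * exp (a * t) <= c -> x <= c * exp (- a * t).
Proof.
  intros H.
  assert (Hcancel : exp (a * t) * exp (- a * t) = 1)
    by (rewrite <- exp_plus, <- exp_0; f_equal; ring).
  pose proof (exp_pos (- a * t)).
  replace x with (x * exp (a * t) * exp (- a * t)) by (rewrite Rmult_assoc, Hcancel; ring).
  apply Rmult_le_compat_r; lra.
Qed.

(* Proof: g = f - K exp (- eta t), K = B / (a - eta),
   satisfies g' + a g <= 0. *)
Lemma forced_decay_bound (f df : R -> R) a eta B :
  0 <= eta < a -> 0 <= B ->
  (forall x, 0 <= x -> continuity_pt f x) ->
  (forall x, 0 < x -> derivable_pt_lim f x (df x)) ->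
  (forall x, 0 < x -> df x + a * f x <= B * exp (- eta * x)) ->
  forall t, 0 <= t -> f t <= Rmax (f 0) (B / (a - eta)) * exp (- eta * t).
Proof.
  intros [Heta0 Heta] HB Hcont Hder Hforce t Ht.
  set (K := B / (a - eta)).
  assert (HK : 0 <= K) by (unfold K, Rdiv; apply Rmult_le_pos;
                           [lra | left; apply Rinv_0_lt_compat; lra]).
  assert (HKB : K * (a - eta) = B) by (unfold K; field; lra).
  set (g := fun x => f x - K * exp (- eta * x)).
  assert (Hg : g t * exp (a * t) <= g 0 * exp (a * 0)).
  { apply (integrating_factor_bound g (fun x => df x + eta * K * exp (- eta * x)));
      [exact Ht | | |].
    - intros x Hx. apply (continuity_pt_minus f (fun y => K * exp (- eta * y))).
      + apply Hcont; lra.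
      + apply (continuity_pt_scal (fun y => exp (- eta * y))), continuity_pt_exp_lin.
    - intros x Hx.
      replace (df x + eta * K * exp (- eta * x))
        with (df x - K * (- eta * exp (- eta * x))) by ring.
      apply (derivable_pt_lim_minus f (fun y => K * exp (- eta * y))).
      + apply Hder; lra.
      + apply (derivable_pt_lim_scal (fun y => exp (- eta * y))), derivable_pt_lim_exp_lin.
    - intros x Hx. unfold g.
      replace (df x + eta * K * exp (- eta * x) + a * (f x - K * exp (- eta * x)))
        with (df x + a * f x - B * exp (- eta * x)) by (rewrite <- HKB; ring).
      pose proof (Hforce x ltac:(lra)). lra. }
  assert (Hg0 : g 0 * exp (a * 0) = f 0 - K)
    by (unfold g; rewrite !Rmult_0_r, exp_0; ring).
  assert (Hgt : g t <= (f 0 - K) * exp (- a * t))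
    by (apply undo_integrating_factor; rewrite <- Hg0; exact Hg).
  assert (Hrates : exp (- a * t) <= exp (- eta * t)) by (apply exp_le_mono; nra).
  pose proof (exp_pos (- a * t)). pose proof (exp_pos (- eta * t)).
  unfold g in Hgt.
  destruct (Rle_lt_dec K (f 0)).
  - rewrite Rmax_left by lra. nra.
  - rewrite Rmax_right by lra. nra.
Qed.

Lemma continuity_pt_of_continuous_from a f t :
  continuous_from a f -> a < t -> continuity_pt f t.
Proof.
  intros Hf Ht eps Heps.
  destruct (Hf t (Rlt_le _ _ Ht) eps Heps) as [del [Hdel Hclose]].
  exists (Rmin del (t - a)). split; [apply Rmin_pos; lra |].
  intros x [_ Hx]. simpl in *. unfold R_dist in *.
  pose proof (Rmin_l del (t - a)). pose proof (Rmin_r del (t - a)).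
  apply Hclose; [| lra].
  assert (Hxt : Rabs (x - t) < t - a) by lra.
  apply Rabs_def2 in Hxt. lra.
Qed.

Lemma continuous_from_opp a f :
  continuous_from a f -> continuous_from a (fun x => - f x).
Proof.
  intros Hf t Ht eps Heps.
  destruct (Hf t Ht eps Heps) as [del [Hdel Hclose]].
  exists del. split; [exact Hdel |]. intros s Hs Hst.
  replace (- f s - - f t) with (- (f s - f t)) by ring.
  rewrite Rabs_Ropp. apply Hclose; assumption.
Qed.

Lemma persistence_right a f t c :
  continuous_from a f -> a <= t -> c < f t ->
  exists del, 0 < del /\ forall s, t <= s < t + del -> c < f s.
Proof.
  intros Hf Ht Hc. destruct (Hf t Ht (f t - c) ltac:(lra)) as [del [Hdel Hclose]].
  exists del. split; [exact Hdel |]. intros s Hs.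
  assert (Hst : Rabs (s - t) < del) by (rewrite Rabs_right; lra).
  apply Hclose in Hst; [| lra]. apply Rabs_def2 in Hst. lra.
Qed.

Lemma lower_bound_at_limit a f lo T c :
  continuous_from a f -> a <= lo < T ->
  (forall s, lo <= s < T -> c <= f s) -> c <= f T.
Proof.
  intros Hf HT Hbound. apply Rnot_lt_le. intro Hlt.
  destruct (Hf T ltac:(lra) (c - f T) ltac:(lra)) as [del [Hdel Hclose]].
  set (s := Rmax lo (T - del / 2)).
  assert (Hlo : lo <= s) by apply Rmax_l.
  assert (Hdelta : T - del / 2 <= s) by apply Rmax_r.
  assert (HsT : s < T) by (unfold s; apply Rmax_lub_lt; lra).
  assert (Hst : Rabs (s - T) < del) by (rewrite Rabs_left; lra).
  apply Hclose in Hst; [| lra]. apply Rabs_def2 in Hst.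
  pose proof (Hbound s ltac:(lra)). lra.
Qed.

Lemma upper_bound_at_limit a f lo T c :
  continuous_from a f -> a <= lo < T ->
  (forall s, lo <= s < T -> f s <= c) -> f T <= c.
Proof.
  intros Hf HT Hbound.
  enough (- c <= - f T) by lra.
  apply (lower_bound_at_limit a (fun x => - f x) lo T);
    [apply continuous_from_opp, Hf | exact HT |].
  intros s Hs. pose proof (Hbound s Hs). lra.
Qed.

Lemma right_deriv_of_derivable f t l :
  derivable_pt_lim f t l -> right_deriv f t l.
Proof.
  intros H eps Heps. destruct (H eps Heps) as [del Hdel].
  exists del. split; [apply cond_pos |].
  intros h Hh. apply Hdel; [lra | rewrite Rabs_right; lra].
Qed.

Lemma right_deriv_opp f t l :
  right_deriv f t l -> right_deriv (fun x => - f x) t (- l).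
Proof.
  intros H eps Heps. destruct (H eps Heps) as [del [Hdel Hclose]].
  exists del. split; [exact Hdel |]. intros h Hh.
  replace ((- f (t + h) - - f t) / h - - l) with (- ((f (t + h) - f t) / h - l))
    by (field; lra).
  rewrite Rabs_Ropp. apply Hclose, Hh.
Qed.

Lemma right_deriv_pos_increasing f t l :
  right_deriv f t l -> 0 < l ->
  exists del, 0 < del /\ forall s, t < s < t + del -> f t < f s.
Proof.
  intros H Hl. destruct (H (l / 2) ltac:(lra)) as [del [Hdel Hclose]].
  exists del. split; [exact Hdel |]. intros s Hs.
  specialize (Hclose (s - t) ltac:(lra)).
  replace (t + (s - t)) with s in Hclose by ring.
  apply Rabs_def2 in Hclose. destruct Hclose as [_ Hquot].
  assert (Hh : 0 < s - t) by lra.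
  assert (Hprod : 0 < (f s - f t) / (s - t) * (s - t))
    by (apply Rmult_lt_0_compat; lra).
  replace ((f s - f t) / (s - t) * (s - t)) with (f s - f t) in Hprod by (field; lra).
  lra.
Qed.

Lemma stays_above a f T c l :
  continuous_from a f -> a <= T -> c <= f T -> right_deriv f T l ->
  (f T = c -> 0 < l) ->
  exists del, 0 < del /\ forall s, T <= s < T + del -> c <= f s.
Proof.
  intros Hf HT Hc Hder Htouch.
  destruct (Rle_lt_or_eq_dec _ _ Hc) as [Hlt | Heq].
  - destruct (persistence_right a f T c Hf HT Hlt) as [del [Hdel Hnear]].
    exists del. split; [exact Hdel |]. intros s Hs. left; apply Hnear, Hs.
  - destruct (right_deriv_pos_increasing f T l Hder (Htouch (eq_sym Heq)))
      as [del [Hdel Hincr]].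
    exists del. split; [exact Hdel |]. intros s [[Hlt | <-] Hs]; [| lra].
    pose proof (Hincr s ltac:(lra)). lra.
Qed.

Lemma stays_below a f T c l :
  continuous_from a f -> a <= T -> f T <= c -> right_deriv f T l ->
  (f T = c -> l < 0) ->
  exists del, 0 < del /\ forall s, T <= s < T + del -> f s <= c.
Proof.
  intros Hf HT Hc Hder Htouch.
  destruct (stays_above a (fun x => - f x) T (- c) (- l)) as [del [Hdel Hnear]].
  - apply continuous_from_opp, Hf.
  - exact HT.
  - lra.
  - apply right_deriv_opp, Hder.
  - intros Heq. assert (l < 0) by (apply Htouch; lra). lra.
  - exists del. split; [exact Hdel |]. intros s Hs. pose proof (Hnear s Hs). lra.
Qed.

Lemma right_nbhd_and (P1 P2 : R -> Prop) T :
  (exists del, 0 < del /\ forall s, T <= s < T + del -> P1 s) ->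
  (exists del, 0 < del /\ forall s, T <= s < T + del -> P2 s) ->
  exists del, 0 < del /\ forall s, T <= s < T + del -> P1 s /\ P2 s.
Proof.
  intros [del1 [Hdel1 H1]] [del2 [Hdel2 H2]].
  exists (Rmin del1 del2). split; [apply Rmin_pos; assumption |].
  pose proof (Rmin_l del1 del2). pose proof (Rmin_r del1 del2).
  intros s Hs. split; [apply H1 | apply H2]; lra.
Qed.

(* Continuous induction on [0, oo): a property that holds at and just after
   every T at which it holds on [0, T) holds everywhere.  Proof: consider the
   supremum of the times up to which it holds. *)
Lemma continuous_induction (P : R -> Prop) :
  (forall T, 0 <= T -> (forall s, 0 <= s < T -> P s) ->
     exists del, 0 < del /\ forall s, T <= s < T + del -> P s) ->
  forall t, 0 <= t -> P t.
Proof.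
  intros Hstep t Ht.
  set (A := fun x => 0 <= x <= t /\ forall s, 0 <= s < x -> P s).
  assert (Hbound : bound A) by (exists t; intros x [Hx _]; lra).
  assert (HA0 : exists x, A x) by (exists 0; split; [lra | intros s Hs; lra]).
  destruct (completeness A Hbound HA0) as [T [HTub HTlub]].
  assert (HT0 : 0 <= T) by (apply HTub; split; [lra | intros s Hs; lra]).
  assert (HTt : T <= t) by (apply HTlub; intros x [Hx _]; lra).
  assert (Hbelow : forall s, 0 <= s < T -> P s).
  { intros s Hs. apply NNPP. intro HnP.
    enough (T <= s) by lra.
    apply HTlub. intros x [_ Hx]. apply Rnot_lt_le. intro Hsx. exact (HnP (Hx s ltac:(lra))). }
  destruct (Hstep T HT0 Hbelow) as [del [Hdel Hnear]].
  destruct (Rlt_le_dec t (T + del)) as [Hlt | Hle]; [apply Hnear; lra |].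
  exfalso.
  assert (HA : A (T + del)).
  { split; [lra |]. intros s Hs.
    destruct (Rlt_le_dec s T); [apply Hbelow | apply Hnear]; lra. }
  pose proof (HTub _ HA). lra.
Qed.

Lemma sqrt_sum_squares_le x y : 0 <= x -> 0 <= y -> sqrt (x ^ 2 + y ^ 2) <= x + y.
Proof.
  intros Hx Hy. rewrite <- (sqrt_pow2 (x + y)) by lra.
  apply sqrt_le_1_alt. nra.
Qed.

(* The model, with the delay factor beta = b e^{-mu zeta} as a parameter;
   only d/m, beta > 1 and the bounds (i)-(iii) enter the argument. *)
Section Washout.

Variables alpha k d m beta zeta M : R.
Variables sigma S Q : R -> R.

Hypotheses (Hk : 0 < k) (Hd : 0 < d) (Hm : 0 < m) (Hzeta : 0 < zeta).
Hypothesis Hsig_id : forall x, 0 <= x <= M -> sigma x = x.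
Hypotheses (HScont : continuous_from (- zeta) S) (HQcont : continuous_from (- zeta) Q).
Hypothesis HQode0 : right_deriv Q 0 (d - m * Q 0 - k * sigma (Q 0) * S 0
  + k * beta * sigma (Q (0 - zeta)) * S (0 - zeta)).
Hypothesis HSode : forall t, 0 < t ->
  derivable_pt_lim S t ((alpha - k * sigma (Q t)) * S t).
Hypothesis HQode : forall t, 0 < t -> derivable_pt_lim Q t
  (d - m * Q t - k * sigma (Q t) * S t + k * beta * sigma (Q (t - zeta)) * S (t - zeta)).
Hypothesis Hgamma : alpha < k * (d / m).
Hypothesis HMdm : d / m < M.
Hypothesis Hbeta : 1 < beta.
Hypothesis Hinit : forall t, - zeta <= t <= 0 -> 0 <= S t <= M /\ d / m <= Q t <= M.
Hypothesis Hpersist : forall t, - zeta <= t <= 0 -> beta * Q t * S t > d / m * S 0.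
Hypothesis Hsmall : forall t, - zeta <= t <= 0 -> S t < (m * M - d) / (k * beta * M).

Local Notation gamma := (k * (d / m) - alpha).

Definition Q_rate (t : R) : R :=
  d - m * Q t - k * sigma (Q t) * S t + k * beta * sigma (Q (t - zeta)) * S (t - zeta).

(* The invariant region: S stays positive and Q stays in [d/m, M], where
   sigma is the identity. *)
Definition in_region (t : R) : Prop := 0 < S t /\ d / m <= Q t <= M.

Lemma Qstar_pos : 0 < d / m.
Proof. apply Rdiv_lt_0_compat; assumption. Qed.

(* By (ii) at t = 0, the initial consumer density is positive. *)
Lemma S0_pos : 0 < S 0.
Proof.
  destruct (Hinit 0 ltac:(lra)) as [[HS0 _] [HQ0 _]].
  pose proof (Hpersist 0 ltac:(lra)) as Hp.
  destruct (Rle_lt_or_eq_dec _ _ HS0) as [Hlt | Heq]; [exact Hlt |].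
  rewrite <- Heq in Hp. lra.
Qed.

Lemma initial_feedback_small t : - zeta <= t <= 0 -> k * beta * M * S t < m * M - d.
Proof.
  intros Ht. pose proof Qstar_pos.
  assert (Hpos : 0 < k * beta * M) by (apply Rmult_lt_0_compat; [nra | lra]).
  pose proof (Rmult_lt_compat_l _ _ _ Hpos (Hsmall t Ht)) as Hprod.
  replace (k * beta * M * ((m * M - d) / (k * beta * M))) with (m * M - d) in Hprod
    by (field; lra).
  exact Hprod.
Qed.

(* Inside the region the uptake rate k sigma(Q) exceeds alpha by at least
   gamma = k d/m - alpha > 0, so S decreases. *)
Lemma S_nonincreasing a c : 0 <= a <= c -> (forall x, a < x < c -> in_region x) ->
  S c <= S a.
Proof.
  intros Hac Hreg.
  apply (nonincreasing_of_deriv_nonpos S (fun x => (alpha - k * sigma (Q x)) * S x));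
    [lra | | |].
  - intros x Hx. apply (continuity_pt_of_continuous_from (- zeta)); [exact HScont | lra].
  - intros x Hx. apply HSode; lra.
  - intros x Hx. destruct (Hreg x Hx) as [HS HQ].
    rewrite Hsig_id by (pose proof Qstar_pos; lra).
    assert (alpha - k * Q x < 0) by nra. nra.
Qed.

(* S cannot reach 0 in finite time while Q <= M: S(t) exp((k M - alpha) t)
   does not decrease. *)
Lemma S_pos_at T : 0 < T -> (forall s, 0 <= s < T -> in_region s) -> 0 < S T.
Proof.
  intros HT Hreg.
  pose proof (integrating_factor_bound (fun x => - S x)
    (fun x => - ((alpha - k * sigma (Q x)) * S x)) (k * M - alpha) 0 T) as H.
  rewrite Rmult_0_r, exp_0 in H.
  assert (Hgrow : - S T * exp ((k * M - alpha) * T) <= - S 0 * 1).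
  { apply H; [lra | | |].
    - intros x Hx. apply continuity_pt_opp.
      apply (continuity_pt_of_continuous_from (- zeta)); [exact HScont | lra].
    - intros x Hx. apply derivable_pt_lim_opp, HSode; lra.
    - intros x Hx. destruct (Hreg x ltac:(lra)) as [HS HQ].
      rewrite Hsig_id by (pose proof Qstar_pos; lra).
      assert (0 <= k * (M - Q x)) by nra. nra. }
  pose proof S0_pos. pose proof (exp_pos ((k * M - alpha) * T)). nra.
Qed.

(* The bounds on Q pass to the limit at T (at T = 0 they are (i)). *)
Lemma Q_bounds_at T : 0 <= T -> (forall s, 0 <= s < T -> in_region s) ->
  d / m <= Q T <= M.
Proof.
  intros HT Hreg.
  destruct (Rle_lt_or_eq_dec _ _ HT) as [Hpos | <-]; [| apply Hinit; lra].
  split.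
  - apply (lower_bound_at_limit (- zeta) Q 0); [exact HQcont | lra |].
    intros s Hs. apply Hreg, Hs.
  - apply (upper_bound_at_limit (- zeta) Q 0); [exact HQcont | lra |].
    intros s Hs. apply Hreg, Hs.
Qed.

Lemma history_bounds T t : (forall s, 0 <= s < T -> in_region s) ->
  - zeta <= t < T -> 0 <= S t /\ d / m <= Q t <= M.
Proof.
  intros Hreg Ht. destruct (Rle_lt_dec t 0) as [Hneg | Hpos].
  - destruct (Hinit t ltac:(lra)) as [HS HQ]. split; [lra | exact HQ].
  - destruct (Hreg t ltac:(lra)) as [HS HQ]. split; [lra | exact HQ].
Qed.

(* The delayed production term dominates the consumption at level Q = d/m:
   on the initial interval by (ii), afterwards since beta > 1 and S decreases. *)
Lemma delayed_persistence T : 0 <= T -> (forall s, 0 <= s < T -> in_region s) ->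
  beta * Q (T - zeta) * S (T - zeta) > d / m * S T.
Proof.
  intros HT Hreg. pose proof Qstar_pos.
  destruct (Rle_lt_dec T zeta) as [Hearly | Hlate].
  - assert (HST : S T <= S 0) by (apply S_nonincreasing; [lra | intros; apply Hreg; lra]).
    pose proof (Hpersist (T - zeta) ltac:(lra)).
    assert (d / m * S T <= d / m * S 0) by (apply Rmult_le_compat_l; lra). lra.
  - destruct (Hreg (T - zeta) ltac:(lra)) as [HSD [HQD _]].
    assert (HST : S T <= S (T - zeta))
      by (apply S_nonincreasing; [lra | intros; apply Hreg; lra]).
    assert (beta * (d / m) * S (T - zeta) <= beta * Q (T - zeta) * S (T - zeta))
      by (apply Rmult_le_compat_r; [lra | apply Rmult_le_compat_l; lra]).
    assert (d / m * S (T - zeta) < beta * (d / m) * S (T - zeta))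
      by (apply Rmult_lt_compat_r; [lra | nra]).
    assert (d / m * S T <= d / m * S (T - zeta)) by (apply Rmult_le_compat_l; lra).
    lra.
Qed.

(* The delayed production term stays below the margin m M - d, since
   S(T - zeta) is bounded by initial values of S. *)
Lemma delayed_feedback_small T : 0 <= T -> (forall s, 0 <= s < T -> in_region s) ->
  k * beta * M * S (T - zeta) < m * M - d.
Proof.
  intros HT Hreg.
  destruct (Rle_lt_dec T zeta) as [Hearly | Hlate].
  - apply initial_feedback_small; lra.
  - assert (HSD : S (T - zeta) <= S 0)
      by (apply S_nonincreasing; [lra | intros; apply Hreg; lra]).
    pose proof (initial_feedback_small 0 ltac:(lra)). pose proof Qstar_pos.
    assert (0 < k * beta * M) by (apply Rmult_lt_0_compat; [nra | lra]).
    nra.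
Qed.

Lemma Q_right_deriv T : 0 <= T -> right_deriv Q T (Q_rate T).
Proof.
  intros HT. destruct (Rle_lt_or_eq_dec _ _ HT) as [Hpos | <-]; [| exact HQode0].
  apply right_deriv_of_derivable, HQode, Hpos.
Qed.

(* Induction step: the region is preserved just after T.  Q cannot leave
   [d/m, M] through d/m (where Q' = k (beta Q_D S_D - d/m S) > 0) nor
   through M (where Q' <= k beta M S_D - (m M - d) < 0). *)
Lemma region_extends T : 0 <= T -> (forall s, 0 <= s < T -> in_region s) ->
  exists del, 0 < del /\ forall s, T <= s < T + del -> in_region s.
Proof.
  intros HT Hreg.
  assert (HST : 0 < S T).
  { destruct (Rle_lt_or_eq_dec _ _ HT) as [Hpos | <-]; [| exact S0_pos].
    apply S_pos_at; assumption. }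
  destruct (Q_bounds_at T HT Hreg) as [HQlo HQhi].
  destruct (history_bounds T (T - zeta) Hreg ltac:(lra)) as [HSD HQD].
  pose proof (delayed_persistence T HT Hreg).
  pose proof (delayed_feedback_small T HT Hreg).
  pose proof Qstar_pos.
  assert (Hd_eq : m * (d / m) = d) by (field; lra).
  pose proof (Q_right_deriv T HT) as Hder. unfold Q_rate in Hder.
  rewrite (Hsig_id (Q T)), (Hsig_id (Q (T - zeta))) in Hder by lra.
  assert (Hlow : Q T = d / m ->
    0 < d - m * Q T - k * Q T * S T + k * beta * Q (T - zeta) * S (T - zeta)).
  { intros ->. rewrite Hd_eq.
    assert (0 < k * (beta * Q (T - zeta) * S (T - zeta) - d / m * S T))
      by (apply Rmult_lt_0_compat; lra).
    lra. }
  assert (Hhigh : Q T = M ->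
    d - m * Q T - k * Q T * S T + k * beta * Q (T - zeta) * S (T - zeta) < 0).
  { intros ->.
    assert (k * beta * Q (T - zeta) * S (T - zeta) <= k * beta * M * S (T - zeta))
      by (apply Rmult_le_compat_r; [lra | apply Rmult_le_compat_l; [nra | lra]]).
    assert (0 <= k * M * S T) by (apply Rmult_le_pos; [apply Rmult_le_pos |]; lra).
    lra. }
  destruct (right_nbhd_and _ _ T
    (right_nbhd_and _ _ T (persistence_right (- zeta) S T 0 HScont ltac:(lra) HST)
       (stays_above (- zeta) Q T (d / m) _ HQcont ltac:(lra) HQlo Hder Hlow))
    (stays_below (- zeta) Q T M _ HQcont ltac:(lra) HQhi Hder Hhigh))
    as [del [Hdel Hnear]].
  exists del. split; [exact Hdel |].
  intros s Hs. destruct (Hnear s Hs) as [[HS HQ1] HQ2]. split; [exact HS | lra].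
Qed.

Lemma region_invariant t : 0 <= t -> in_region t.
Proof. apply continuous_induction, region_extends. Qed.

(* With gamma = k d/m - alpha > 0: S' + gamma S = k (d/m - Q) S <= 0. *)
Lemma S_exp_decay t : 0 <= t -> S t <= S 0 * exp (- gamma * t).
Proof.
  intros Ht. apply undo_integrating_factor.
  pose proof (integrating_factor_bound S (fun x => (alpha - k * sigma (Q x)) * S x)
                gamma 0 t Ht) as H.
  rewrite Rmult_0_r, exp_0, Rmult_1_r in H. apply H.
  - intros x Hx. apply (continuity_pt_of_continuous_from (- zeta)); [exact HScont | lra].
  - intros x Hx. apply HSode; lra.
  - intros x Hx. destruct (region_invariant x ltac:(lra)) as [HS HQ].
    rewrite Hsig_id by (pose proof Qstar_pos; lra).
    assert (0 <= k * (Q x - d / m)) by nra. nra.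
Qed.

Lemma delayed_S_decay t : 0 <= t ->
  S (t - zeta) <= M * exp (gamma * zeta) * exp (- gamma * t).
Proof.
  intros Ht. pose proof Qstar_pos.
  assert (Hshift : exp (gamma * zeta) * exp (- gamma * t) = exp (- gamma * (t - zeta)))
    by (rewrite <- exp_plus; f_equal; ring).
  rewrite Rmult_assoc, Hshift.
  destruct (Rle_lt_dec t zeta) as [Hearly | Hlate].
  - destruct (Hinit (t - zeta) ltac:(lra)) as [[_ HSM] _].
    assert (1 <= exp (- gamma * (t - zeta))) by (rewrite <- exp_0; apply exp_le_mono; nra).
    nra.
  - pose proof (S_exp_decay (t - zeta) ltac:(lra)).
    destruct (Hinit 0 ltac:(lra)) as [[_ HS0M] _].
    pose proof (exp_pos (- gamma * (t - zeta))). nra.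
Qed.

(* For the deviation Q - d/m:  (Q - d/m)' + m (Q - d/m) = - k Q S + k beta Q_D S_D,
   which is at most k beta M S_D and hence decays like exp (- gamma t). *)
Lemma Q_forcing_bound x : 0 < x ->
  Q_rate x + m * (Q x - d / m) <= k * beta * M * (M * exp (gamma * zeta)) * exp (- gamma * x).
Proof.
  intros Hx. pose proof Qstar_pos. unfold Q_rate.
  destruct (region_invariant x ltac:(lra)) as [HS HQ].
  destruct (history_bounds x (x - zeta) (fun s Hs => region_invariant s (proj1 Hs))
              ltac:(lra)) as [HSD HQD].
  rewrite (Hsig_id (Q x)), (Hsig_id (Q (x - zeta))) by lra.
  assert (Hkb : 0 < k * beta * M) by (apply Rmult_lt_0_compat; [nra | lra]).
  assert (k * beta * Q (x - zeta) * S (x - zeta) <= k * beta * M * S (x - zeta))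
    by (apply Rmult_le_compat_r; [lra | apply Rmult_le_compat_l; [nra | lra]]).
  assert (k * beta * M * S (x - zeta)
            <= k * beta * M * (M * exp (gamma * zeta) * exp (- gamma * x)))
    by (apply Rmult_le_compat_l; [lra | apply delayed_S_decay; lra]).
  assert (0 <= k * Q x * S x) by (apply Rmult_le_pos; [apply Rmult_le_pos |]; lra).
  assert (m * (d / m) = d) by (field; lra).
  nra.
Qed.

Lemma Q_exp_decay eta : 0 <= eta <= gamma -> eta < m ->
  exists c, 0 <= c /\ forall t, 0 <= t -> Q t - d / m <= c * exp (- eta * t).
Proof.
  intros Heta Hetam.
  set (B := k * beta * M * (M * exp (gamma * zeta))).
  assert (HB : 0 <= B).
  { pose proof Qstar_pos. pose proof (exp_pos (gamma * zeta)).
    unfold B. apply Rmult_le_pos; [apply Rmult_le_pos |]; nra. }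
  exists (Rmax (Q 0 - d / m) (B / (m - eta))). split.
  { apply Rle_trans with (B / (m - eta)); [| apply Rmax_r].
    unfold Rdiv. apply Rmult_le_pos; [lra | left; apply Rinv_0_lt_compat; lra]. }
  apply (forced_decay_bound (fun x => Q x - d / m) Q_rate m eta B); [lra | exact HB | | |].
  - intros x Hx. apply (continuity_pt_minus Q (fun _ => d / m)).
    + apply (continuity_pt_of_continuous_from (- zeta)); [exact HQcont | lra].
    + apply continuity_pt_const. intros ? ?; reflexivity.
  - intros x Hx. rewrite <- (Rminus_0_r (Q_rate x)).
    apply (derivable_pt_lim_minus Q (fun _ => d / m)).
    + apply HQode, Hx.
    + apply derivable_pt_lim_const.
  - intros x Hx. eapply Rle_trans; [apply Q_forcing_bound, Hx |].
    apply Rmult_le_compat_l; [exact HB | apply exp_le_mono; nra].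
Qed.

Theorem washout_convergence : exists c, 0 < c /\ forall t, 0 <= t ->
  sqrt ((S t - 0) ^ 2 + (Q t - d / m) ^ 2) <= c * exp (- (Rmin gamma (m / 2)) * t).
Proof.
  set (eta := Rmin gamma (m / 2)).
  assert (Heta : 0 <= eta <= gamma) by (split; [left; apply Rmin_pos; lra | apply Rmin_l]).
  assert (Hetam : eta < m) by (assert (eta <= m / 2) by apply Rmin_r; lra).
  destruct (Q_exp_decay eta Heta Hetam) as [cQ [HcQ HQdecay]].
  pose proof S0_pos.
  exists (S 0 + cQ). split; [lra |]. intros t Ht.
  destruct (region_invariant t Ht) as [HS [HQ _]].
  rewrite Rminus_0_r.
  eapply Rle_trans; [apply sqrt_sum_squares_le; lra |].
  assert (S t <= S 0 * exp (- eta * t)).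
  { eapply Rle_trans; [apply S_exp_decay, Ht |].
    apply Rmult_le_compat_l; [lra | apply exp_le_mono; nra]. }
  pose proof (HQdecay t Ht). lra.
Qed.

End Washout.

Theorem mainTheorem7
  (alpha k d m b mu zeta M C : R)
  (Halpha : 0 < alpha) (Hk : 0 < k) (Hd : 0 < d) (Hm : 0 < m) (Hb : 0 < b)
  (Hmu : 0 < mu) (Hzeta : 0 < zeta) (HM : 0 < M) (HC : 1 < C)
  (sigma : R -> R) (Dsig : nat -> R -> R)
  (Hsmooth : smooth_with sigma Dsig)
  (Hsig_nonneg : forall x, 0 <= x -> 0 <= sigma x)
  (Hsig_id : forall x, 0 <= x <= M -> sigma x = x)
  (Hsig_top : forall x, M + 1 < x -> sigma x = M + 1)
  (Hsig_der : forall x, 0 <= x -> 0 <= Dsig 1%nat x <= C)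
  (S Q : R -> R)
  (HScont : continuous_from (- zeta) S) (HQcont : continuous_from (- zeta) Q)
  (HSode0 : right_deriv S 0 ((alpha - k * sigma (Q 0)) * S 0))
  (HQode0 : right_deriv Q 0 (d - m * Q 0 - k * sigma (Q 0) * S 0
              + k * b * exp (- mu * zeta) * sigma (Q (0 - zeta)) * S (0 - zeta)))
  (HSode : forall t, 0 < t -> derivable_pt_lim S t ((alpha - k * sigma (Q t)) * S t))
  (HQode : forall t, 0 < t -> derivable_pt_lim Q t
             (d - m * Q t - k * sigma (Q t) * S t
              + k * b * exp (- mu * zeta) * sigma (Q (t - zeta)) * S (t - zeta)))
  (Hgamma : 0 < k * d / m - alpha)
  (HMdm : d / m < M)
  (Hi : forall t, - zeta <= t <= 0 -> 0 <= S t <= M /\ d / m <= Q t <= M)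
  (Hii : forall t, - zeta <= t <= 0 -> b * exp (- mu * zeta) * Q t * S t > d / m * S 0)
  (Hii' : b * exp (- mu * zeta) > 1)
  (Hiii : forall t, - zeta <= t <= 0 ->
            S t < (m * M - d) / (k * b * exp (- mu * zeta) * M)) :
  exists c, 0 < c /\ forall t, 0 <= t ->
    sqrt ((S t - 0) ^ 2 + (Q t - d / m) ^ 2)
      <= c * exp (- (Rmin (k * d / m - alpha) (m / 2)) * t).
Proof.
  assert (Hkdm : k * d / m = k * (d / m)) by (field; lra).
  rewrite Hkdm in Hgamma |- *.
  rewrite (Rmult_assoc k b) in HQode0, HQode, Hiii.
  apply (washout_convergence alpha k d m (b * exp (- mu * zeta)) zeta M sigma S Q);
    assumption || lra.
Qed.
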